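(* Let $K\ge2$, $\varepsilon>0$, $Z^*\in\mathbb{R}^K_{>0}$, and $\gamma\in\mathcal{P}^\varepsilon(K)$ (the value of the rung density at the current $\mu$). For $\eta\ge0$ and $Z\in\mathbb{R}^K_{>0}$ let $o^*_\eta(Z)$ be the steady state of the tilt mean field, i.e. the solution $o\in\mathbb{R}^K_{>0}$ of $g^o_k(\pi^{\mathrm{TSS},\eta}(o),Z,o)=0$ for all $k$, and define $$D_\eta(Z)=\nabla_Z V_\gamma(Z)\cdot g^Z\big(\pi^{\mathrm{TSS},\eta}(o^*_\eta(Z)),Z\big),$$ the time derivative of $V_\gamma(Z(t))$ at the point $Z$ along the ODE $\dot Z=g^Z(\pi^{\mathrm{TSS},\eta}(o^*_\eta(Z)),Z)$. Then for all $Z\in\mathbb{R}^K_{>0}$ and all $\eta'>\eta\ge0$, $$D_{\eta'}(Z)\le D_\eta(Z)\le 0,$$ and both inequalities are strict unless $Z$ is a scalar multiple of $Z^*$, in which case both derivatives equal $0$.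
   Context: $\mathcal{P}^\varepsilon(K)$ is the set of probability vectors on $\{1,\dots,K\}$ with all entries $\ge\varepsilon$. For $\pi\in\mathcal P^\varepsilon(K)$ and $Z\in\mathbb{R}^K_{>0}$, the mean field of the partition function estimates is $g^Z_k(\pi,Z)=\dfrac{Z_k^*}{\sum_\ell\pi_\ell Z^*_\ell/Z_\ell}-Z_k$, and the mean field of the tilts is $g^o_k(\pi,Z,o)=\dfrac{1}{\gamma_k}\dfrac{\pi_kZ_k^*/Z_k}{\sum_\ell\pi_\ell Z_\ell^*/Z_\ell}-o_k$. The (unregularized) visit-control rung density with parameter $\eta\ge0$ is $\pi^{\mathrm{TSS},\eta}_k(o)=\dfrac{\gamma_k o_k^{-\eta}}{\sum_\ell\gamma_\ell o_\ell^{-\eta}}$. The Lyapunov function is the relative entropy $V_\gamma(Z)=-\sum_k\gamma_k\log(r_k/\gamma_k)$ with $r_k=\dfrac{\gamma_kZ_k^*/Z_k}{\sum_\ell\gamma_\ell Z^*_\ell/Z_\ell}$. *)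

From HB Require Import structures.
From mathcomp Require Import all_boot all_order all_algebra.
From mathcomp Require Import all_classical all_reals all_analysis.
Set Implicit Arguments. Unset Strict Implicit. Unset Printing Implicit Defensive.
Import Order.TTheory GRing.Theory Num.Theory.
Local Open Scope ring_scope.

Section Defs.
Variables (R : realType) (K : nat).
Implicit Types (gam pi Z Zs o : 'I_K -> R) (eps eta : R).

Definition Peps eps gam : Prop :=
  (forall k, eps <= gam k) /\ \sum_(l < K) gam l = 1.

Definition wsum Zs pi Z : R := \sum_(l < K) pi l * Zs l / Z l.

Definition gZ Zs pi Z (k : 'I_K) : R := Zs k / wsum Zs pi Z - Z k.

Definition gO gam Zs pi Z o (k : 'I_K) : R :=
  (gam k)^-1 * ((pi k * Zs k / Z k) / wsum Zs pi Z) - o k.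

Definition piTSS gam eta o (k : 'I_K) : R :=
  gam k * powR (o k) (- eta) / \sum_(l < K) gam l * powR (o l) (- eta).

Definition rr gam Zs Z (k : 'I_K) : R := gam k * Zs k / Z k / wsum Zs gam Z.
Definition Vgam gam Zs Z : R :=
  - \sum_(k < K) gam k * ln (rr gam Zs Z k / gam k).

Definition partial (F : ('I_K -> R) -> R) (k : 'I_K) Z : R :=
  derive1 (fun t : R => F (fun l => if l == k then Z l + t else Z l)) 0.

Definition Dder gam Zs pi Z : R :=
  \sum_(k < K) partial (Vgam gam Zs) k Z * gZ Zs pi Z k.

End Defs.

(* Write w_k = Z*_k / Z_k.  Along g^Z(pi, .) the relative entropy V_gamma
   decreases at rate Var_gamma(w) / (E_gamma(w) W), where W = sum_k pi_k w_k,
   and Var_gamma(w) vanishes exactly when Z is proportional to Z*.  At the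
   steady state of the tilts o_k^(1+eta) is proportional to w_k, so the rung
   density is proportional to gamma_k w_k^(-eta/(1+eta)) and W is the mean of w
   under these tilted weights.  Since eta/(1+eta) increases with eta and
   reweighting by a decreasing function of w lowers the mean of w (Chebyshev's
   sum inequality), W decreases, hence the decay rate increases, with eta. *)

From HB Require Import structures.
From mathcomp Require Import all_boot all_order all_algebra.
From mathcomp Require Import all_classical all_reals all_analysis.
From mathcomp Require Import ring lra.
Set Implicit Arguments. Unset Strict Implicit. Unset Printing Implicit Defensive.
Import Order.TTheory GRing.Theory Num.Theory.
Local Open Scope ring_scope.

Section PairSums.
Variables (R : realFieldType) (I : finType).
Implicit Types (F : I -> R) (f : I -> I -> R).

Lemma psumr_gt0 F i0 : (forall i, 0 <= F i) -> 0 < F i0 -> 0 < \sum_i F i.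
Proof. by move=> F_ge0 Fi0; rewrite (bigD1 i0) //= ltr_wpDr ?sumr_ge0. Qed.

Lemma double_sum_symmetrize f :
  (\sum_i \sum_j f i j) *+ 2 = \sum_i \sum_j (f i j + f j i).
Proof.
rewrite mulr2n; under [RHS]eq_bigr do rewrite big_split.
by rewrite big_split /= [X in _ + X = _]exchange_big.
Qed.

Lemma double_sum_gt0 f i0 j0 :
  (forall i j, 0 <= f i j + f j i) -> 0 < f i0 j0 + f j0 i0 ->
  0 < \sum_i \sum_j f i j.
Proof.
move=> f_ge0 f_gt0.
rewrite -(pmulrn_lgt0 _ (isT : (0 < 2)%N)) double_sum_symmetrize.
apply: (psumr_gt0 (i0 := i0)) => [i|]; first exact: sumr_ge0.
exact: (psumr_gt0 (i0 := j0)).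
Qed.

End PairSums.

Definition wvar (R : pzRingType) (I : finType) (q w : I -> R) : R :=
  \sum_i q i * w i ^+ 2 - (\sum_i q i * w i) ^+ 2.

Section WeightedVariance.
Variables (R : realFieldType) (I : finType) (q w : I -> R).
Hypothesis q_sum1 : \sum_i q i = 1.

Lemma wvar_pairs :
  wvar q w *+ 2 = \sum_i \sum_j q i * q j * (w i - w j) ^+ 2.
Proof.
have -> : wvar q w = \sum_i \sum_j q i * q j * (w i ^+ 2 - w i * w j).
  rewrite /wvar expr2 mulr_suml; under [X in _ - X]eq_bigr do rewrite mulr_sumr.
  rewrite -sumrB; apply: eq_bigr => i _.
  by rewrite -[q i * _]mulr1 -q_sum1 mulr_sumr -sumrB; apply: eq_bigr => j _; ring.
by rewrite double_sum_symmetrize; apply: eq_bigr => i _; apply: eq_bigr => j _; ring.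
Qed.

Lemma wvar_gt0 i0 j0 : (forall i, 0 < q i) -> w i0 != w j0 -> 0 < wvar q w.
Proof.
move=> q_gt0 wij; rewrite -(pmulrn_lgt0 _ (isT : (0 < 2)%N)) wvar_pairs.
have pair_ge0 i j : 0 <= q i * q j * (w i - w j) ^+ 2.
  by rewrite mulr_ge0 ?sqr_ge0 ?mulr_ge0 ?ltW.
apply: (psumr_gt0 (i0 := i0)) => [i|]; first exact: sumr_ge0.
apply: (psumr_gt0 (i0 := j0)) => [j|]; first exact: pair_ge0.
apply: mulr_gt0; first exact: mulr_gt0.
by rewrite lt_def sqrf_eq0 subr_eq0 wij sqr_ge0.
Qed.

Lemma wvar_eq0 : (forall i j, w i = w j) -> wvar q w = 0.
Proof.
move=> w_const; apply/eqP; have := mulrn_eq0 (wvar q w) 2; rewrite /= => <-.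
rewrite wvar_pairs big1 // => i _; rewrite big1 // => j _.
by rewrite (w_const i j) subrr expr0n mulr0.
Qed.

End WeightedVariance.

Definition wmean (R : fieldType) (I : finType) (q w : I -> R) : R :=
  (\sum_i q i * w i) / \sum_i q i.

Lemma wmean_scale (R : fieldType) (I : finType) (c : R) (q w : I -> R) :
  c != 0 -> wmean (fun i => c * q i) w = wmean q w.
Proof.
move=> c_neq0; rewrite /wmean -mulr_sumr.
under eq_bigr do rewrite -mulrA.
by rewrite -mulr_sumr invfM mulrACA divff // mul1r.
Qed.

Lemma wmean_gt0 (R : realFieldType) (I : finType) (q w : I -> R) (i0 : I) :
  (forall i, 0 < q i) -> (forall i, 0 < w i) -> 0 < wmean q w.
Proof.
move=> q_gt0 w_gt0; apply: divr_gt0.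
  by apply: (psumr_gt0 (i0 := i0)) => [i|]; [apply: ltW|]; exact: mulr_gt0.
by apply: (psumr_gt0 (i0 := i0)) => [i|//]; exact: ltW.
Qed.

Section WeightedMeanTilt.
Variables (R : realFieldType) (I : finType) (q rho w : I -> R).
Hypotheses (q_gt0 : forall i, 0 < q i) (rho_gt0 : forall i, 0 < rho i).
Hypothesis rho_anti : forall i j, w i < w j -> rho j < rho i.

Let pair_term i j := q i * q j * w i * (rho j - rho i).

Let pair_termS i j :
  pair_term i j + pair_term j i = q i * q j * ((w i - w j) * (rho j - rho i)).
Proof. by rewrite /pair_term; ring. Qed.

Let pair_gt0 i j : w i != w j -> 0 < (w i - w j) * (rho j - rho i).
Proof.
case: (ltgtP (w i) (w j)) => // [wij|wji] _.
  by rewrite -mulrNN mulr_gt0 // oppr_gt0 subr_lt0 // rho_anti.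
by rewrite mulr_gt0 // subr_gt0 // rho_anti.
Qed.

Let pair_termS_ge0 i j : 0 <= pair_term i j + pair_term j i.
Proof.
rewrite pair_termS mulr_ge0 //; first by rewrite mulr_ge0 ?ltW.
by have [->|/pair_gt0/ltW //] := eqVneq (w i) (w j); rewrite subrr mul0r.
Qed.

Let sum_q_gt0 (i0 : I) : 0 < \sum_i q i.
Proof. by apply: (psumr_gt0 (i0 := i0)) => [i|//]; exact: ltW. Qed.

Let sum_qrho_gt0 (i0 : I) : 0 < \sum_i q i * rho i.
Proof. by apply: (psumr_gt0 (i0 := i0)) => [i|]; [apply: ltW|]; exact: mulr_gt0. Qed.

(* Chebyshev's sum inequality: the numerator pairs up into the terms
   q_i q_j (w_i - w_j) (rho_j - rho_i), all of the same sign. *)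
Lemma wmean_tilt_lt (i0 j0 : I) : w i0 != w j0 ->
  wmean (fun i => q i * rho i) w < wmean q w.
Proof.
move=> wij; rewrite -subr_gt0.
have -> : wmean q w - wmean (fun i => q i * rho i) w =
    (\sum_i \sum_j pair_term i j) / ((\sum_i q i) * \sum_i q i * rho i).
  rewrite /wmean [in RHS]/pair_term.
  have -> : \sum_i \sum_j q i * q j * w i * (rho j - rho i) =
      (\sum_i q i * w i) * (\sum_i q i * rho i) -
      (\sum_i q i * rho i * w i) * (\sum_i q i).
    rewrite !mulr_suml -sumrB; apply: eq_bigr => i _.
    by rewrite !mulr_sumr -sumrB; apply: eq_bigr => j _; ring.
  by field; rewrite !gt_eqF ?sum_q_gt0 ?sum_qrho_gt0.
rewrite divr_gt0 ?mulr_gt0 ?sum_q_gt0 ?sum_qrho_gt0 //.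
apply: (double_sum_gt0 (i0 := i0) (j0 := j0)) => //.
by rewrite pair_termS; apply: mulr_gt0; [exact: mulr_gt0 | exact: pair_gt0].
Qed.

End WeightedMeanTilt.

Lemma gt0_ltr_powRN (R : realType) (d x y : R) :
  0 < d -> 0 < x -> x < y -> y `^ (- d) < x `^ (- d).
Proof.
move=> d_gt0 x_gt0 xy; have y_gt0 := lt_trans x_gt0 xy.
rewrite !powRN ltf_pV2 ?posrE ?powR_gt0 //.
by apply: gt0_ltr_powR; rewrite ?nnegrE ?ltW.
Qed.

Lemma wmean_powR_lt (R : realType) (I : finType) (q w : I -> R) (b b' : R)
    (i0 j0 : I) :
  (forall i, 0 < q i) -> (forall i, 0 < w i) -> b < b' -> w i0 != w j0 ->
  wmean (fun i => q i * w i `^ (- b')) w < wmean (fun i => q i * w i `^ (- b)) w.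
Proof.
move=> q_gt0 w_gt0 bb' wij.
have -> : (fun i => q i * w i `^ (- b')) =
    (fun i => q i * w i `^ (- b) * w i `^ (- (b' - b))).
  apply/funext => i; rewrite -mulrA -powRD ?(gt_eqF (w_gt0 i)) ?implybT //.
  by congr (_ * powR _ _); ring.
apply: (wmean_tilt_lt _ _ _ wij) => [i|i|i j wij'].
- by rewrite mulr_gt0 ?powR_gt0.
- exact: powR_gt0.
- by apply: gt0_ltr_powRN; rewrite ?subr_gt0.
Qed.

Lemma ltr_div_1D (R : realFieldType) (x y : R) :
  0 <= x -> x < y -> x / (1 + x) < y / (1 + y).
Proof.
move=> x_ge0 xy; have y_ge0 : 0 <= y by rewrite ltW ?(le_lt_trans x_ge0).
rewrite ltr_pdivrMr ?ltr_wpDr // mulrAC ltr_pdivlMr ?ltr_wpDr //.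
by rewrite !mulrDr !mulr1 [y * x]mulrC ltrD2r.
Qed.

Lemma proportionalP (R : realFieldType) (I : finType) (Z Zs : I -> R) (i0 : I) :
  (forall k, 0 < Z k) -> (forall k, 0 < Zs k) ->
  (exists c, forall k, Z k = c * Zs k) <-> (forall i j, Zs i / Z i = Zs j / Z j).
Proof.
move=> Z_gt0 Zs_gt0; split => [[c Zc] i j | w_const].
  have c_neq0 : c != 0.
    by apply: contraTneq (Z_gt0 i0) => c0; rewrite Zc c0 mul0r ltxx.
  have ratio k : Zs k / (c * Zs k) = c^-1.
    by rewrite invfM mulrCA divff ?mulr1 ?gt_eqF.
  by rewrite !Zc !ratio.
exists (Z i0 / Zs i0) => k.
by rewrite -invf_div -(w_const k i0) invf_div divfK ?gt_eqF.
Qed.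

Lemma wsum_piTSS (R : realType) (K : nat) (gam Zs Z o : 'I_K -> R) (eta : R) :
  wsum Zs (piTSS gam eta o) Z =
  wmean (fun k => gam k * o k `^ (- eta)) (fun k => Zs k / Z k).
Proof.
by rewrite /wsum /wmean mulr_suml; apply: eq_bigr => k _; rewrite /piTSS; ring.
Qed.

Section SteadyState.
Variables (R : realType) (K : nat) (gam Zs Z o : 'I_K -> R) (eta : R).
Hypotheses (K_gt0 : (0 < K)%N) (gam_gt0 : forall k, 0 < gam k).
Hypotheses (Zs_gt0 : forall k, 0 < Zs k) (Z_gt0 : forall k, 0 < Z k).
Hypotheses (o_gt0 : forall k, 0 < o k) (eta_ge0 : 0 <= eta).
Hypothesis o_steady : forall k, gO gam Zs (piTSS gam eta o) Z o k = 0.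

Let w k := Zs k / Z k.
Let p k := o k `^ (- eta).
Let N := \sum_k gam k * p k.
Let W := wsum Zs (piTSS gam eta o) Z.

Let p_gt0 k : 0 < p k. Proof. exact: powR_gt0. Qed.

Let N_gt0 : 0 < N.
Proof.
by apply: (psumr_gt0 (i0 := Ordinal K_gt0)) => [k|]; [apply: ltW|]; rewrite mulr_gt0.
Qed.

Let W_gt0 : 0 < W.
Proof.
rewrite /W wsum_piTSS; apply: (wmean_gt0 (Ordinal K_gt0)) => k.
  by rewrite mulr_gt0 ?powR_gt0.
exact: divr_gt0.
Qed.

Let NW_gt0 : 0 < N * W. Proof. exact: mulr_gt0. Qed.

Let steady_balance k : p k * w k = o k * (N * W).
Proof.
have := o_steady k; rewrite /gO -/W /piTSS -/(p k) -/N.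
move/eqP; rewrite subr_eq0 => /eqP <-; rewrite /w.
by field; rewrite !gt_eqF.
Qed.

Let steady_ratio k : w k / (N * W) = o k `^ (1 + eta).
Proof.
have := steady_balance k; rewrite /p powRN => balance.
have -> : w k = o k * (N * W) * o k `^ eta.
  by rewrite -balance mulrC mulVKf // gt_eqF ?powR_gt0.
rewrite powRD; last by rewrite (gt_eqF (o_gt0 k)) implybT.
by rewrite powRr1 ?ltW // mulrAC mulfK ?gt_eqF.
Qed.

Lemma steady_wsum :
  W = wmean (fun k => gam k * w k `^ (- (eta / (1 + eta)))) w.
Proof.
set a := eta / (1 + eta); set C := (N * W)^-1 `^ (- a).
have p_tilt k : p k = C * w k `^ (- a).
  rewrite /C -powRM; last 2 first.
  - by rewrite invr_ge0 ltW.
  - by rewrite ltW ?divr_gt0.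
  rewrite mulrC steady_ratio -powRrM /p /a; congr powR.
  by field; apply: lt0r_neq0; rewrite ltr_wpDr.
have C_neq0 : C != 0 by rewrite gt_eqF ?powR_gt0 ?invr_gt0.
rewrite /W wsum_piTSS -[RHS](wmean_scale _ _ C_neq0).
by congr wmean; apply/funext => k; rewrite -/(p k) p_tilt mulrCA.
Qed.

End SteadyState.

Section Derivatives.
Variable R : realType.
Implicit Types (f : R -> R) (x a : R).

Lemma is_derive_sumr n (h : 'I_n -> R -> R) x (dh : 'I_n -> R) :
  (forall i, is_derive x 1 (h i) (dh i)) ->
  is_derive x 1 (fun t => \sum_(i < n) h i t) (\sum_(i < n) dh i).
Proof. by move=> hd; rewrite -(fct_sumE _ _ h); exact: is_derive_sum. Qed.

Lemma is_derive_ln f x a : is_derive x 1 f a -> 0 < f x ->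
  is_derive x 1 (fun t => ln (f t)) (a / f x).
Proof.
move=> df fx_gt0; rewrite mulrC.
exact: (is_derive1_comp (is_derive1_ln fx_gt0) df).
Qed.

Lemma is_deriveMl f x a (c : R) : is_derive x 1 f a ->
  is_derive x 1 (fun t => c * f t) (c * a).
Proof. by move=> df; have := is_deriveZ c df. Qed.

End Derivatives.

Lemma sum_mulr_delta (R : pzSemiRingType) (I : finType) (F : I -> R) (k : I) :
  \sum_i F i * (i == k)%:R = F k.
Proof.
rewrite (bigD1 k) //= eqxx mulr1 big1 ?addr0 // => i /negbTE ->; exact: mulr0.
Qed.

Section Lyapunov.
Variables (R : realType) (K : nat) (gam Zs : 'I_K -> R).
Hypotheses (gam_gt0 : forall k, 0 < gam k) (Zs_gt0 : forall k, 0 < Zs k).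
Hypothesis K_gt0 : (0 < K)%N.

Lemma is_derive_wsum (pi : 'I_K -> R) (u : 'I_K -> R -> R) (du : 'I_K -> R) x :
  (forall l, u l x != 0) -> (forall l, is_derive x 1 (u l) (du l)) ->
  is_derive x 1 (fun t => wsum Zs pi (u^~ t))
    (- \sum_l pi l * Zs l * du l / u l x ^+ 2).
Proof.
move=> u_neq0 du_dt; rewrite -sumrN; apply: is_derive_sumr => l.
apply: is_derive_eq (is_deriveMl _ (is_deriveV (u_neq0 l) (du_dt l))) _.
by rewrite /GRing.scale /=; field.
Qed.

Lemma is_derive_Vgam (u : 'I_K -> R -> R) (du : 'I_K -> R) x :
  (forall l, 0 < u l x) -> (forall l, is_derive x 1 (u l) (du l)) ->
  is_derive x 1 (fun t => Vgam gam Zs (u^~ t))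
    (\sum_j gam j * du j / u j x -
     (\sum_j gam j) * (\sum_l gam l * Zs l * du l / u l x ^+ 2) /
       wsum Zs gam (u^~ x)).
Proof.
move=> u_gt0 du_dt; have u_neq0 l : u l x != 0 := lt0r_neq0 (u_gt0 l).
set W := fun t => wsum Zs gam (u^~ t).
have W_gt0 : 0 < W x.
  by apply: (psumr_gt0 (i0 := Ordinal K_gt0)) => [l|]; [apply: ltW|];
    rewrite divr_gt0 ?mulr_gt0.
have dW_dt := is_derive_wsum gam u_neq0 du_dt; rewrite -/W in dW_dt.
have -> : (fun t => Vgam gam Zs (u^~ t)) =
    (fun t => \sum_j - gam j * ln (Zs j * ((u j t)^-1 * (W t)^-1))).
  apply/funext => t; rewrite /Vgam -sumrN; apply: eq_bigr => j _.
  rewrite mulNr; congr (- (_ * ln _)).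
  by rewrite /rr [LHS]mulrC !mulrA mulVf ?gt_eqF // mul1r -!mulrA.
have inner_gt0 j : 0 < Zs j * ((u j x)^-1 * (W x)^-1).
  by rewrite !mulr_gt0 ?invr_gt0.
have d_inner j := is_deriveMl (Zs j) (is_deriveM
  (is_deriveV (u_neq0 j) (du_dt j)) (is_deriveV (lt0r_neq0 W_gt0) dW_dt)).
apply: is_derive_eq (is_derive_sumr (fun j =>
  is_deriveMl (- gam j) (is_derive_ln (d_inner j) (inner_gt0 j)))) _.
rewrite -[in RHS]mulrA [(\sum_j gam j) * _]mulr_suml -sumrB.
apply: eq_bigr => j _.
by rewrite /GRing.scale mulrfctE /= -/(W x); field; rewrite u_neq0 !lt0r_neq0.
Qed.

Lemma partial_Vgam (Z : 'I_K -> R) k : (forall l, 0 < Z l) ->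
  partial (Vgam gam Zs) k Z =
  gam k / Z k - (\sum_j gam j) * (gam k * Zs k / Z k ^+ 2) / wsum Zs gam Z.
Proof.
move=> Z_gt0; pose u l t := if l == k then Z l + t else Z l.
have u0 l : u l 0 = Z l by rewrite /u addr0; case: ifP.
have du_dt (l : 'I_K) : is_derive (0 : R) 1 (u l) (l == k)%:R.
  rewrite /u; case: eqP => _ /=; last exact: is_derive_cst.
  have := is_deriveD (is_derive_cst (Z l) (0 : R) 1) (is_derive_id (0 : R) 1).
  by rewrite add0r.
have u_gt0 l : 0 < u l 0 by rewrite u0.
rewrite /partial derive1E.
rewrite (@derive_val _ _ _ _ _ _ _ (is_derive_Vgam u_gt0 du_dt)).
under eq_bigr do rewrite mulrAC u0.
under [X in _ * X / _]eq_bigr do rewrite mulrAC u0.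
rewrite !sum_mulr_delta; congr (_ - _ / wsum _ _ _).
by apply/funext => l; rewrite u0.
Qed.

Section SteadyDerivative.
Variable Z : 'I_K -> R.
Hypotheses (gam_sum1 : \sum_k gam k = 1) (Z_gt0 : forall k, 0 < Z k).

Let w k := Zs k / Z k.
Let S := \sum_k gam k * w k.

Let w_gt0 k : 0 < w k. Proof. exact: divr_gt0. Qed.

Let S_gt0 : 0 < S.
Proof.
by apply: (psumr_gt0 (i0 := Ordinal K_gt0)) => [k|]; [apply: ltW|]; rewrite mulr_gt0.
Qed.

Lemma Dder_closed_form (pi : 'I_K -> R) : wsum Zs pi Z != 0 ->
  Dder gam Zs pi Z = - wvar gam w / (S * wsum Zs pi Z).
Proof.
set W := wsum Zs pi Z => W_neq0.
have SE : wsum Zs gam Z = S by apply: eq_bigr => k _; rewrite mulrA.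
rewrite /Dder (eq_bigr (fun k =>
    gam k * w k * (W^-1 + S^-1) - gam k - gam k * w k ^+ 2 / (S * W))); last first.
  move=> k _; rewrite partial_Vgam // gam_sum1 SE /gZ -/W /w.
  by field; rewrite W_neq0 !lt0r_neq0.
rewrite !sumrB -!mulr_suml gam_sum1 -/S /wvar -/S.
by field; rewrite W_neq0 lt0r_neq0.
Qed.

Let M b := wmean (fun k => gam k * w k `^ (- b)) w.

Let M_gt0 b : 0 < M b.
Proof.
apply: (wmean_gt0 (Ordinal K_gt0)) => // k.
exact: mulr_gt0 (gam_gt0 k) (powR_gt0 _ (w_gt0 k)).
Qed.

Lemma Dder_steady (eta : R) (o : 'I_K -> R) :
  0 <= eta -> (forall k, 0 < o k) ->
  (forall k, gO gam Zs (piTSS gam eta o) Z o k = 0) ->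
  Dder gam Zs (piTSS gam eta o) Z = - wvar gam w / (S * M (eta / (1 + eta))).
Proof.
move=> eta_ge0 o_gt0 o_steady.
have WE := steady_wsum K_gt0 gam_gt0 Zs_gt0 Z_gt0 o_gt0 eta_ge0 o_steady.
by rewrite Dder_closed_form WE // gt_eqF ?M_gt0.
Qed.

Lemma Dder_steady_eq0 (eta : R) (o : 'I_K -> R) :
  0 <= eta -> (forall k, 0 < o k) ->
  (forall k, gO gam Zs (piTSS gam eta o) Z o k = 0) ->
  (forall i j, w i = w j) -> Dder gam Zs (piTSS gam eta o) Z = 0.
Proof.
by move=> eta_ge0 o_gt0 o_steady w_const; rewrite Dder_steady // wvar_eq0 // oppr0 mul0r.
Qed.

Lemma Dder_steady_lt (eta eta' : R) (o o' : 'I_K -> R) (i j : 'I_K) :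
  0 <= eta -> eta < eta' ->
  (forall k, 0 < o k) -> (forall k, gO gam Zs (piTSS gam eta o) Z o k = 0) ->
  (forall k, 0 < o' k) -> (forall k, gO gam Zs (piTSS gam eta' o') Z o' k = 0) ->
  w i != w j ->
  Dder gam Zs (piTSS gam eta' o') Z < Dder gam Zs (piTSS gam eta o) Z /\
  Dder gam Zs (piTSS gam eta o) Z < 0.
Proof.
move=> eta_ge0 eta_lt o_gt0 o_steady o'_gt0 o'_steady wij.
have eta'_ge0 : 0 <= eta' by rewrite ltW ?(le_lt_trans eta_ge0).
rewrite !Dder_steady // !mulNr ltrN2 oppr_lt0.
have V_gt0 : 0 < wvar gam w := wvar_gt0 gam_sum1 gam_gt0 wij.
have M_lt : M (eta' / (1 + eta')) < M (eta / (1 + eta)).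
  exact: wmean_powR_lt gam_gt0 w_gt0 (ltr_div_1D eta_ge0 eta_lt) wij.
split; last exact: divr_gt0 V_gt0 (mulr_gt0 S_gt0 (M_gt0 _)).
by rewrite ltr_pM2l // ltf_pV2 ?posrE ?(mulr_gt0 S_gt0 (M_gt0 _)) // ltr_pM2l.
Qed.

End SteadyDerivative.

End Lyapunov.

Theorem proposition2 (R : realType) (K : nat) (eps : R) (Zs gam : 'I_K -> R) :
  (2 <= K)%N -> 0 < eps -> (forall k, 0 < Zs k) -> Peps eps gam ->
  forall (Z : 'I_K -> R) (eta eta' : R) (o o' : 'I_K -> R),
    (forall k, 0 < Z k) -> 0 <= eta -> eta < eta' ->
    (* o = o*_eta(Z) : positive steady state of the tilt mean field *)
    (forall k, 0 < o k) ->
    (forall k, gO gam Zs (piTSS gam eta o) Z o k = 0) ->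
    (* o' = o*_eta'(Z) *)
    (forall k, 0 < o' k) ->
    (forall k, gO gam Zs (piTSS gam eta' o') Z o' k = 0) ->
    let D := Dder gam Zs (piTSS gam eta o) Z in
    let D' := Dder gam Zs (piTSS gam eta' o') Z in
    [/\ D' <= D, D <= 0,
        (exists c : R, forall k, Z k = c * Zs k) -> D' = 0 /\ D = 0
      & ~ (exists c : R, forall k, Z k = c * Zs k) -> D' < D /\ D < 0].
Proof.
move=> K2 ? Zs_gt0 [gam_ge gam1] Z eta eta' o o' Z_gt0 eta_ge0 eta_lt
  o_gt0 o_steady o'_gt0 o'_steady D D'.
have K_gt0 : (0 < K)%N by apply: leq_trans K2.
have gam_gt0 k : 0 < gam k by apply: lt_le_trans (gam_ge k).
have propP := proportionalP (Ordinal K_gt0) Z_gt0 Zs_gt0.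
have [prop | nprop] := pselect (exists c, forall k, Z k = c * Zs k).
  have w_const := propP.1 prop.
  have eta'_ge0 : 0 <= eta' by rewrite ltW ?(le_lt_trans eta_ge0).
  by rewrite /D /D' !(Dder_steady_eq0 gam_gt0 Zs_gt0 K_gt0 gam1 Z_gt0) //; split.
have /existsNP[i /existsNP[j /eqP wij]] : ~ forall i j, Zs i / Z i = Zs j / Z j.
  by move/propP.
have [D'_lt D_lt0] := Dder_steady_lt gam_gt0 Zs_gt0 K_gt0 gam1 Z_gt0
  eta_ge0 eta_lt o_gt0 o_steady o'_gt0 o'_steady wij.
by split; rewrite ?ltW.
Qed.
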